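(* For every $n\ge 3$, if $T$ is chosen uniformly at random from $\bigsqcup_{b\ge1,k\ge0,\,2b+k=n}\mathrm{SYT}^{+k}((b,b))$, the expected number of columns of $T$ (i.e. the expected value of $b$) is $\dfrac{n^2+n-6}{4n-6}$.
   Context: $\mathrm{SYT}^{+k}(\lambda)$: for a partition $\lambda$ of $N$ and $k\ge0$, the set of fillings of the cells of $\lambda$ by nonempty sets of positive integers forming a set partition of $[N+k]$, with $\max S(u)<\min S(v)$ whenever $u\ne v$ and $u$ is weakly northwest of $v$. The shape $(b,b)$ is the $2\times b$ rectangle. *)

From mathcomp Require Import all_boot all_order all_algebra.
Set Implicit Arguments. Unset Strict Implicit. Unset Printing Implicit Defensive.

(* Cells of the 2 x b rectangle (b,b): (row, column), 0-indexed.
   The ground set [N+k] = {1,...,n} is represented by 'I_n = {0,...,n-1}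
   (order-preserving shift by one). *)
Definition cell (b : nat) := ('I_2 * 'I_b)%type.

Definition weakNW (b : nat) (u v : cell b) : bool :=
  (u.1 <= v.1)%N && (u.2 <= v.2)%N.

(* S is an element of SYT^{+k}((b,b)) where n = 2b + k:
   nonempty sets forming a set partition of [n], increasing along weak NW order. *)
Definition is_SYTplus (b n : nat) (S : {ffun cell b -> {set 'I_n}}) : bool :=
  [&& [forall u, S u != set0],
      [forall u, forall v, (u != v) ==> (S u :&: S v == set0)],
      (\bigcup_(u : cell b) S u == [set: 'I_n]) &
      [forall u, forall v, ((u != v) && weakNW u v) ==>
          [forall x in S u, forall y in S v, (x < y)%N]]].

Definition nSYTplus (b n : nat) : nat := #|[set S | @is_SYTplus b n S]|.

(* Deleting the largest entry of a filling leaves a filling of the same cell set, or of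
   the set with the corner that held that entry alone removed.  For the two-row shapes
   (a, c) this gives a recursion for the number of fillings of [n]: a weighted lattice
   path count from the empty shape.  The sums over the rectangles (b, b) are obtained by
   running the recursion backwards: pairing the forward counts at time n with the
   number of ways to complete a shape into a rectangle in L more steps gives a quantity
   that only depends on n + L.  At n = 0 it is a single backward count, a weighted
   Motzkin path count, which Pascal's rule identifies with a difference of binomial
   coefficients (a ballot number); the same holds for the count weighted by the number
   of columns. *)

From mathcomp Require Import all_boot all_order all_algebra.
From mathcomp Require Import zify ring lra.
Import GRing.Theory Num.Theory.
Set Implicit Arguments. Unset Strict Implicit. Unset Printing Implicit Defensive.

Section Fillings.

Variable m : nat.
Implicit Types (D : {set cell m}) (u v : cell m).

Definition filling n D (S : {ffun cell m -> {set 'I_n}}) : bool :=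
  [&& [forall u, (S u != set0) == (u \in D)],
      [forall u, forall v, (u != v) ==> (S u :&: S v == set0)],
      (\bigcup_(u : cell m) S u == [set: 'I_n]) &
      [forall u, forall v, ((u != v) && weakNW u v) ==>
          [forall x in S u, forall y in S v, (x < y)%N]]].

Definition nfillings n D := #|[set S | @filling n D S]|.

Definition corner D u : bool := (u \in D) && [forall v in D, (v != u) ==> ~~ weakNW u v].

Lemma fillingP n D (S : {ffun cell m -> {set 'I_n}}) :
  reflect [/\ forall u, (S u != set0) = (u \in D),
              forall u v x, u != v -> x \in S u -> x \in S v -> False,
              (forall x, exists u, x \in S u) &
              forall u v x y, u != v -> weakNW u v -> x \in S u -> y \in S v -> x < y]
          (filling D S).
Proof.
apply: (iffP and4P) => -[H1 H2 H3 H4]; split.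
- by move=> u; move/forallP: H1 => /(_ u) /eqP.
- move=> u v x Huv Hu Hv; move/forallP: H2 => /(_ u) /forallP /(_ v).
  by rewrite Huv /= => /eqP /setP /(_ x); rewrite inE Hu Hv inE.
- move=> x; move/eqP/setP: H3 => /(_ x); rewrite inE => /bigcupP [u _ Hu].
  by exists u.
- move=> u v x y Huv Hw Hx Hy; move/forallP: H4 => /(_ u) /forallP /(_ v).
  rewrite Huv Hw /= => /forall_inP /(_ x Hx) /forall_inP; exact.
- by apply/forallP => u; rewrite H1.
- apply/forallP => u; apply/forallP => v; apply/implyP => Huv.
  apply/eqP/setP => x; rewrite !inE; apply/negbTE/andP => -[Hu Hv].
  exact: (H2 u v x).
- apply/eqP/setP => x; rewrite !inE; case: (H3 x) => u Hu.
  by apply/bigcupP; exists u.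
- apply/forallP => u; apply/forallP => v; apply/implyP => /andP [Huv Hw].
  apply/forall_inP => x Hx; apply/forall_inP => y Hy; exact: (H4 u v).
Qed.

Lemma cornerP D u0 :
  reflect (u0 \in D /\ forall v, v \in D -> v != u0 -> ~~ weakNW u0 v) (corner D u0).
Proof.
apply: (iffP andP) => -[H1 H2]; split => //.
- by move=> v Hv Hn; move/forall_inP: H2 => /(_ v Hv); rewrite Hn.
- by apply/forall_inP => v Hv; apply/implyP; exact: H2.
Qed.

Lemma nfillings0 D : nfillings 0 D = (D == set0).
Proof.
have S0 (S : {ffun cell m -> {set 'I_0}}) : S = [ffun=> set0].
  by apply/ffunP => u; apply/setP => -[].
rewrite /nfillings; case: (eqVneq D set0) => [->|/set0Pn [u Du]] /=.
  suff -> : [set S : {ffun cell m -> {set 'I_0}} | filling set0 S] = [set [ffun=> set0]].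
    by rewrite cards1.
  apply/setP => S; rewrite !inE (S0 S) eqxx; apply/fillingP; split.
  + by move=> v; rewrite ffunE eqxx inE.
  + by move=> v w [].
  + by move=> [].
  + by move=> v w [].
apply/eqP; rewrite cards_eq0; apply/eqP/setP => S; rewrite !inE.
apply/negbTE/fillingP => -[H1 _ _ _].
by move: (H1 u); rewrite Du (S0 S) ffunE eqxx.
Qed.

Definition widenS n : 'I_n -> 'I_n.+1 := widen_ord (leqnSn n).

Definition add_max n u0 (T : {ffun cell m -> {set 'I_n}}) : {ffun cell m -> {set 'I_n.+1}} :=
  [ffun u => (@widenS n @: T u) :|: (if u == u0 then [set ord_max] else set0)].

Definition del_max n (S : {ffun cell m -> {set 'I_n.+1}}) : {ffun cell m -> {set 'I_n}} :=
  [ffun u => [set x | widenS x \in S u]].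

Lemma widenS_inj n : injective (@widenS n).
Proof. by move=> x y /(congr1 val) /= /val_inj. Qed.

Lemma widenS_neq_max n (x : 'I_n) : (widenS x == ord_max) = false.
Proof. by apply/negbTE; rewrite -val_eqE /= neq_ltn ltn_ord. Qed.

Lemma ord_maxVwidenS n (y : 'I_n.+1) : y = ord_max \/ exists x, y = widenS x.
Proof.
case: (unliftP ord_max y) => [x ->|->]; last by left.
by right; exists x; apply/val_inj => /=; rewrite /bump leqNgt ltn_ord.
Qed.

Lemma max_in_add_max n u0 (T : {ffun cell m -> {set 'I_n}}) u :
  (ord_max \in add_max u0 T u) = (u == u0).
Proof.
rewrite ffunE in_setU; case: (u == u0); rewrite ?inE ?eqxx ?orbT //= orbF.
by apply/negbTE/imsetP => -[x _ /eqP]; rewrite eq_sym widenS_neq_max.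
Qed.

Lemma widenS_in_add_max n u0 (T : {ffun cell m -> {set 'I_n}}) u x :
  (widenS x \in add_max u0 T u) = (x \in T u).
Proof.
rewrite ffunE in_setU mem_imset; last exact: widenS_inj.
by case: (u == u0); rewrite ?inE ?widenS_neq_max orbF.
Qed.

Lemma mem_del_max n (S : {ffun cell m -> {set 'I_n.+1}}) u x :
  (x \in del_max S u) = (widenS x \in S u).
Proof. by rewrite ffunE inE. Qed.

Lemma add_maxK n u0 : cancel (@add_max n u0) (@del_max n).
Proof.
by move=> T; apply/ffunP => u; apply/setP => x; rewrite mem_del_max widenS_in_add_max.
Qed.

Lemma del_maxK n u0 (S : {ffun cell m -> {set 'I_n.+1}}) :
  (forall u, (ord_max \in S u) = (u == u0)) -> add_max u0 (del_max S) = S.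
Proof.
move=> Smax; apply/ffunP => u; apply/setP => y.
case: (ord_maxVwidenS y) => [->|[x ->]]; first by rewrite max_in_add_max Smax.
by rewrite widenS_in_add_max mem_del_max.
Qed.

Lemma filling_add_max n D D' u0 (T : {ffun cell m -> {set 'I_n}}) :
  filling D' T -> corner D u0 -> (forall u, u != u0 -> (u \in D') = (u \in D)) ->
  filling D (add_max u0 T).
Proof.
move=> /fillingP [H1 H2 H3 H4] /cornerP [Hu0 Hmax] HD; apply/fillingP; split.
- move=> u; case: (eqVneq u u0) => [->|Hne].
    by rewrite Hu0; apply/set0Pn; exists ord_max; rewrite max_in_add_max eqxx.
  by rewrite -HD // -H1 ffunE (negbTE Hne) setU0 imset_eq0.
- move=> u v y Huv.
  case: (ord_maxVwidenS y) => [->|[x ->]]; rewrite ?max_in_add_max ?widenS_in_add_max.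
    by move=> /eqP Eu /eqP Ev; move: Huv; rewrite Eu Ev eqxx.
  exact: H2.
- move=> y; case: (ord_maxVwidenS y) => [->|[x ->]].
    by exists u0; rewrite max_in_add_max.
  by case: (H3 x) => u Hu; exists u; rewrite widenS_in_add_max.
- move=> u v x y Huv Hw.
  case: (ord_maxVwidenS x) => [->|[x' ->]]; case: (ord_maxVwidenS y) => [->|[y' ->]];
    rewrite ?max_in_add_max ?widenS_in_add_max.
  + by move=> /eqP Eu /eqP Ev; move: Huv; rewrite Eu Ev eqxx.
  + move=> /eqP Eu Hy; subst u; exfalso.
    have Hv : v \in D' by rewrite -H1; apply/set0Pn; exists y'.
    rewrite eq_sym in Huv.
    by move: (Hmax v); rewrite -HD // Hv Huv Hw => /(_ isT isT).
  + by rewrite /= ltn_ord.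
  + exact: H4.
Qed.

Lemma filling_del_max n D u0 (S : {ffun cell m -> {set 'I_n.+1}}) :
  filling D S -> ord_max \in S u0 ->
  [/\ corner D u0, (forall u, (ord_max \in S u) = (u == u0)) &
      filling (if S u0 == [set ord_max] then D :\ u0 else D) (del_max S)].
Proof.
move=> /fillingP [H1 H2 H3 H4] Hm.
have Hu0 : u0 \in D by rewrite -H1; apply/set0Pn; exists ord_max.
have Smax u : (ord_max \in S u) = (u == u0).
  case: (eqVneq u u0) => [->//|Hne]; apply/negbTE/negP => Hu.
  exact: (H2 u u0 ord_max Hne).
split => //.
  apply/cornerP; split => // v Hv Hne; apply/negP => Hw.
  move: Hv; rewrite -H1 => /set0Pn [y Hy].
  have := H4 u0 v ord_max y; rewrite eq_sym Hne Hw => /(_ isT isT Hm Hy).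
  by rewrite ltnNge -ltnS ltn_ord.
apply/fillingP; split.
- move=> u; case: (eqVneq u u0) => [->|Hne].
    case: ifP => [/eqP E|E].
      rewrite setD11; apply/negbTE; rewrite negbK; apply/eqP/setP => x.
      by rewrite mem_del_max E !inE widenS_neq_max.
    rewrite Hu0; apply/set0Pn.
    have [y Hy Hyn] : exists2 y, y \in S u0 & y != ord_max.
      apply/exists_inP; apply: contraFT E => /exists_inPn Hall.
      apply/eqP/setP => y; rewrite inE; apply/idP/idP => [Hy|/eqP ->//].
      by move: (Hall y Hy); rewrite negbK.
    case: (ord_maxVwidenS y) Hy Hyn => [->|[x ->]]; first by rewrite eqxx.
    by move=> Hx _; exists x; rewrite mem_del_max.
  have -> : (u \in (if S u0 == [set ord_max] then D :\ u0 else D)) = (u \in D).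
    by case: ifP => _ //; rewrite !inE Hne.
  rewrite -H1; apply/idP/idP => /set0Pn [y Hy]; apply/set0Pn.
    by exists (widenS y); rewrite -mem_del_max.
  case: (ord_maxVwidenS y) Hy => [->|[x ->]]; first by rewrite Smax (negbTE Hne).
  by move=> Hx; exists x; rewrite mem_del_max.
- by move=> u v x Huv; rewrite !mem_del_max; exact: H2.
- by move=> x; case: (H3 (widenS x)) => u Hu; exists u; rewrite mem_del_max.
- move=> u v x y Huv Hw; rewrite !mem_del_max; exact: H4.
Qed.

Lemma fillings_max_shared n D u0 :
  [set S : {ffun cell m -> {set 'I_n.+1}} | filling D S &
     (ord_max \in S u0) && (S u0 != [set ord_max])]
  = add_max u0 @: [set T | corner D u0 && filling D T].
Proof.
apply/setP => S; rewrite inE; apply/idP/imsetP.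
  move=> /andP [HS /andP [Hm Hne]]; have [Hmax Smax Hok] := filling_del_max HS Hm.
  exists (del_max S); last by rewrite del_maxK.
  by rewrite inE Hmax; rewrite (negbTE Hne) in Hok.
move=> [T]; rewrite inE => /andP [Hmax HT] ->.
rewrite (filling_add_max HT Hmax) //= max_in_add_max eqxx /=.
move/cornerP: (Hmax) => [Hu0 _]; move/fillingP: HT => [H1 _ _ _].
move: Hu0; rewrite -H1 => /set0Pn [x Hx].
by apply/negP => /eqP /setP /(_ (widenS x)); rewrite widenS_in_add_max Hx inE widenS_neq_max.
Qed.

Lemma fillings_max_alone n D u0 :
  [set S : {ffun cell m -> {set 'I_n.+1}} | filling D S & S u0 == [set ord_max]]
  = add_max u0 @: [set T | corner D u0 && filling (D :\ u0) T].
Proof.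
apply/setP => S; rewrite inE; apply/idP/imsetP.
  move=> /andP [HS He].
  have Hm : ord_max \in S u0 by rewrite (eqP He) set11.
  have [Hmax Smax Hok] := filling_del_max HS Hm.
  exists (del_max S); last by rewrite del_maxK.
  by rewrite inE Hmax; rewrite He in Hok.
move=> [T]; rewrite inE => /andP [Hmax HT] ->.
rewrite (filling_add_max HT Hmax) => [/=|u Hne]; last by rewrite !inE Hne.
move/fillingP: HT => [H1 _ _ _].
have T0 : T u0 = set0 by apply/eqP; move: (H1 u0); rewrite !inE eqxx /= => /negbFE.
apply/eqP/setP => y; case: (ord_maxVwidenS y) => [->|[x ->]].
  by rewrite max_in_add_max in_set1 !eqxx.
by rewrite widenS_in_add_max T0 !inE widenS_neq_max.
Qed.

Lemma card_corner_fillings n D D' u0 :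
  #|[set T : {ffun cell m -> {set 'I_n}} | corner D u0 && filling D' T]|
  = if corner D u0 then nfillings n D' else 0.
Proof.
rewrite /nfillings; case: (corner D u0); first by apply: eq_card => T; rewrite !inE.
by apply/eqP; rewrite cards_eq0; apply/eqP/setP => T; rewrite !inE.
Qed.

(* The largest entry lies in a corner u0 of D, either alone or not. *)
Lemma nfillingsS n D :
  nfillings n.+1 D =
  \sum_(u0 : cell m) (if corner D u0 then nfillings n D + nfillings n (D :\ u0) else 0).
Proof.
have -> : nfillings n.+1 D = \sum_(u0 : cell m)
    #|[set S : {ffun cell m -> {set 'I_n.+1}} | filling D S & ord_max \in S u0]|.
  rewrite /nfillings -sum1_card.
  transitivity (\sum_(S in [set S | filling D S]) \sum_(u0 : cell m) ((@ord_max n \in S u0) : nat)).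
    apply: eq_bigr => S; rewrite inE => HS.
    move/fillingP: (HS) => [_ _ H3 _]; case: (H3 ord_max) => u0 Hu0.
    have [_ Smax _] := filling_del_max HS Hu0.
    rewrite (bigD1 u0) //= Hu0 big1 // => u Hu; by rewrite Smax (negbTE Hu).
  rewrite exchange_big /=; apply: eq_bigr => u0 _.
  rewrite -sum1_card big_mkcond /= [RHS]big_mkcond /=; apply: eq_bigr => S _.
  by rewrite !inE; case: (filling D S); case: (ord_max \in S u0).
apply: eq_bigr => u0 _.
rewrite -(cardsID [set S : {ffun cell m -> {set 'I_n.+1}} | S u0 == [set ord_max]]).
have -> : [set S : {ffun cell m -> {set 'I_n.+1}} | filling D S & ord_max \in S u0]
            :&: [set S : {ffun cell m -> {set 'I_n.+1}} | S u0 == [set ord_max]]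
          = [set S | filling D S & S u0 == [set ord_max]].
  apply/setP => S; rewrite !inE; case E: (S u0 == [set ord_max]); rewrite ?andbF //.
  by rewrite (eqP E) in_set1 !eqxx ?andbT.
have -> : [set S : {ffun cell m -> {set 'I_n.+1}} | filling D S & ord_max \in S u0]
            :\: [set S : {ffun cell m -> {set 'I_n.+1}} | S u0 == [set ord_max]]
          = [set S | filling D S & (ord_max \in S u0) && (S u0 != [set ord_max])].
  by apply/setP => S; rewrite !inE andbC andbA.
rewrite fillings_max_shared fillings_max_alone !card_imset; try exact: can_inj (add_maxK _).
by rewrite !card_corner_fillings; case: (corner D u0) => //; rewrite addnC.
Qed.

End Fillings.

Definition rows2 m (a c : nat) : {set cell m} :=
  [set u : cell m | if u.1 == 0 :> nat then u.2 < a else u.2 < c].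

Definition row0_end m a : cell m.+1 := (ord0, inord a.-1).
Definition row1_end m c : cell m.+1 := (ord_max, inord c.-1).

Lemma cell_eqE m (u v : cell m) : (u == v) = (u.1 == v.1 :> nat) && (u.2 == v.2 :> nat).
Proof. by case: u v => [i j] [k l]; rewrite xpair_eqE. Qed.

Lemma ord2P (i : 'I_2) : i = 0 :> nat \/ i = 1 :> nat.
Proof. by case: i => [[|[|k]] Hk] /=; [left|right|]. Qed.

Lemma corner_rows2 m a c (u : cell m.+1) : c <= a -> a <= m.+1 ->
  corner (rows2 m.+1 a c) u = (u == row0_end m a) && (c < a) || (u == row1_end m c) && (0 < c).
Proof.
move=> ca am.
have Ea : (inord a.-1 : 'I_m.+1) = a.-1 :> nat by rewrite inordK //; lia.
have Ec : (inord c.-1 : 'I_m.+1) = c.-1 :> nat by rewrite inordK //; lia.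
apply/cornerP/idP.
- case: u => [i j] [Hu Hmax]; move: Hu; rewrite inE /= !cell_eqE /= Ea Ec.
  have no_right_neighbor (b : nat) : j.+1 < b -> b <= m.+1 -> (if i == 0 :> nat then j.+1 < a else j.+1 < c)
      -> False.
    move=> jb bm Hin; have j1 : j.+1 < m.+1 by lia.
    have := Hmax (i, Ordinal j1); rewrite inE /= Hin cell_eqE /= /weakNW /= leqnn.
    by rewrite (gtn_eqF (ltnSn j)) leqnSn andbF => /(_ isT isT).
  case: (ord2P i) => Ei; rewrite Ei /= => Hj.
  + have [ja|aj] := ltnP j.+1 a; first by case: (no_right_neighbor a); rewrite ?Ei.
    have [ca'|ac] := ltnP c a; first by apply/orP; left; lia.
    have ca' : c = a by lia.
    have := Hmax (ord_max, j); rewrite inE /= ca' Hj cell_eqE /= /weakNW /= Ei leqnn.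
    by move=> /(_ isT isT).
  + have [jc|cj] := ltnP j.+1 c; last by lia.
    by case: (no_right_neighbor c); rewrite ?Ei //; lia.
- move=> /orP [/andP [/eqP -> ca']|/andP [/eqP -> c0]].
  + split; first by rewrite inE /= Ea; lia.
    case=> [k l]; rewrite inE /= /weakNW /= cell_eqE /= Ea.
    by case: (ord2P k) => ->; rewrite /=; lia.
  + split; first by rewrite inE /= Ec; lia.
    case=> [k l]; rewrite inE /= /weakNW /= cell_eqE /= Ec.
    by case: (ord2P k) => ->; rewrite /=; lia.
Qed.

Fixpoint nrows2 (n a c : nat) : nat :=
  match n with
  | 0 => (a == 0) && (c == 0)
  | n'.+1 => if c <= a then
      (if c < a then nrows2 n' a c + nrows2 n' a.-1 c else 0) +
      (if 0 < c then nrows2 n' a c + nrows2 n' a c.-1 else 0) else 0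
  end.

Lemma rows2_del0 m a c : c < a -> a <= m.+1 -> rows2 m.+1 a c :\ row0_end m a = rows2 m.+1 a.-1 c.
Proof.
move=> ca am; have Ea : (inord a.-1 : 'I_m.+1) = a.-1 :> nat by rewrite inordK //; lia.
by apply/setP => -[i j]; rewrite !inE cell_eqE /= Ea; case: (ord2P i) => ->; rewrite /=; lia.
Qed.

Lemma rows2_del1 m a c : 0 < c -> c <= m.+1 -> rows2 m.+1 a c :\ row1_end m c = rows2 m.+1 a c.-1.
Proof.
move=> c0 cm; have Ec : (inord c.-1 : 'I_m.+1) = c.-1 :> nat by rewrite inordK //; lia.
by apply/setP => -[i j]; rewrite !inE cell_eqE /= Ec; case: (ord2P i) => ->; rewrite /=; lia.
Qed.

Lemma nfillings_rows2 m n a c : c <= a -> a <= m.+1 -> nfillings n (rows2 m.+1 a c) = nrows2 n a c.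
Proof.
elim: n a c => [|n IH] a c ca am.
  rewrite nfillings0 /=; case: a ca am => [|a] ca am.
    have -> : c = 0 by lia.
    suff -> : rows2 m.+1 0 0 = set0 :> {set cell m.+1} by rewrite !eqxx.
    by apply/setP => -[i j]; rewrite !inE; case: ifP.
  suff /negbTE -> : rows2 m.+1 a.+1 c != set0 by [].
  by apply/set0Pn; exists (ord0, ord0); rewrite inE.
rewrite nfillingsS /= ca.
have ends_neq : row0_end m a != row1_end m c by rewrite cell_eqE.
rewrite (bigD1 (row0_end m a)) //= (bigD1 (row1_end m c)) //= big1 => [|u /andP [u0 u1]];
  last by rewrite corner_rows2 // (negbTE u0) (negbTE u1).
rewrite !corner_rows2 // eqxx (negbTE ends_neq) eq_sym (negbTE ends_neq) eqxx /= addn0.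
have [ca'|ac] := ltnP c a; have [c0|c0] := posnP c => /=.
- by rewrite c0 rows2_del0 ?IH //; lia.
- by rewrite rows2_del0 ?rows2_del1 ?IH //; lia.
- lia.
- have ac' : a = c by lia.
  by rewrite rows2_del1 ?IH //; subst; lia.
Qed.

Lemma nSYTplus_rows2 b n : nSYTplus b.+1 n = nrows2 n b.+1 b.+1.
Proof.
rewrite -(@nfillings_rows2 b) // /nSYTplus /nfillings.
have -> : rows2 b.+1 b.+1 b.+1 = setT.
  by apply/setP => -[i j]; rewrite !inE; case: ifP; rewrite ltn_ord.
apply: eq_card => S; rewrite !inE /is_SYTplus /filling.
by congr andb; apply: eq_forallb => u; rewrite inE eqb_id.
Qed.

Lemma nrows2_gt n a c : a < c -> nrows2 n a c = 0.
Proof. by case: n => [|n] /= ac; [case: a ac => //; case: c | rewrite leqNgt ac]. Qed.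

Lemma nrows2_big n a c : n < a + c -> nrows2 n a c = 0.
Proof.
elim: n a c => [|n IH] a c H /=; first by case: a H => //; case: c.
case: ifP => // _.
by rewrite !IH; try lia; case: ifP; case: ifP => //= *; rewrite ?IH; lia.
Qed.

(* [nfinish L d e] counts the weighted continuations, by L steps of the recursion of
   [nrows2], of a two-row shape with row difference d and nonempty second row iff e,
   that end in a nonempty rectangle; [topfinish] weights each continuation by the number
   of cells it adds to the first row. *)
Fixpoint nfinish (L d : nat) (e : bool) : nat :=
  match L with
  | 0 => (d == 0) && e
  | L'.+1 => nfinish L' d.+1 e + (0 < d) * nfinish L' d.-1 true + ((0 < d) + e) * nfinish L' d e
  end.

Fixpoint topfinish (L d : nat) (e : bool) : nat :=
  match L with
  | 0 => 0
  | L'.+1 => topfinish L' d.+1 e + nfinish L' d.+1 e + (0 < d) * topfinish L' d.-1 true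
             + ((0 < d) + e) * topfinish L' d e
  end.

Lemma nfinish_gt0 L : 0 < nfinish L 0 true.
Proof. by elim: L => //= L IH; lia. Qed.

Lemma nfinish_false_gt0 L : 0 < nfinish L.+2 0 false.
Proof. by have := nfinish_gt0 L; rewrite /=; lia. Qed.

(* Truncating at K is harmless once n < K.-1, since [nrows2 n a c = 0] for n < a + c. *)
Definition pairing K n (X : nat -> nat -> nat) :=
  \sum_(0 <= a < K) \sum_(0 <= c < K) nrows2 n a c * X a c.

Definition adjoint (X : nat -> nat -> nat) a c :=
  (c <= a) * ((c < a) + (0 < c)) * X a c + (c <= a) * X a.+1 c + (c < a) * X a c.+1.

Lemma pairing_ext K n X Y :
  (forall a c, c <= a -> X a c = Y a c) -> pairing K n X = pairing K n Y.
Proof.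
move=> XY; apply: eq_bigr => a _; apply: eq_bigr => c _.
by have [/XY ->//|ac] := leqP c a; rewrite nrows2_gt.
Qed.

Lemma sum_nat_shift K (g : nat -> nat) : g 0 = 0 -> g K = 0 ->
  \sum_(0 <= a < K) g a = \sum_(0 <= a < K) g a.+1.
Proof.
case: K => [|K] g0 gK; first by rewrite !big_geq.
by rewrite big_nat_recl // g0 add0n big_nat_recr //= gK addn0.
Qed.

Lemma pairingS K n X : n.+1 < K -> pairing K n.+1 X = pairing K n (adjoint X).
Proof.
move=> nK.
have split_term a c : nrows2 n.+1 a c * X a c =
    nrows2 n a c * ((c <= a) * ((c < a) + (0 < c)) * X a c)
    + (c < a) * nrows2 n a.-1 c * X a c + ((c <= a) && (0 < c)) * nrows2 n a c.-1 * X a c.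
  rewrite /=; case: (leqP c a) => ca /=; last first.
    by rewrite (_ : c < a = false) ?muln0 //; lia.
  by case: (c < a); case: (0 < c); rewrite /=; ring.
rewrite /pairing.
under eq_bigr => a _ do under eq_bigr => c _ do rewrite split_term.
under eq_bigr => a _ do rewrite !big_split /=.
rewrite !big_split /= [X in _ + X + _]exchange_big /=.
have shift_a : \sum_(0 <= c < K) \sum_(0 <= a < K) (c < a) * nrows2 n a.-1 c * X a c
    = \sum_(0 <= c < K) \sum_(0 <= a < K) nrows2 n a c * ((c <= a) * X a.+1 c).
  apply: eq_bigr => c _; rewrite sum_nat_shift.
  - by apply: eq_bigr => a _ /=; ring.
  - by rewrite ltn0.
  - by rewrite nrows2_big ?muln0 ?mul0n //; lia.
have shift_c a : \sum_(0 <= c < K) ((c <= a) && (0 < c)) * nrows2 n a c.-1 * X a c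
    = \sum_(0 <= c < K) nrows2 n a c * ((c < a) * X a c.+1).
  rewrite sum_nat_shift.
  - by apply: eq_bigr => c _ /=; rewrite andbT; ring.
  - by rewrite andbF.
  - by rewrite nrows2_big ?muln0 ?mul0n //; lia.
rewrite shift_a [X in _ + X + _]exchange_big /= (eq_bigr _ (fun a _ => shift_c a)) -!big_split /=.
by apply: eq_bigr => a _; rewrite -!big_split /=; apply: eq_bigr => c _; rewrite /adjoint; ring.
Qed.

Lemma pairing0 K X : 0 < K -> pairing K 0 X = X 0 0.
Proof.
case: K => // K _; rewrite /pairing big_nat_recl // big_nat_recl //= mul1n.
rewrite big1_seq => [|c _]; last by rewrite mul0n.
by rewrite big1_seq ?addn0 // => a _; rewrite big1_seq.
Qed.

Lemma pairing_invariant K n (W : nat -> nat -> nat -> nat) :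
  (forall L a c, c <= a -> adjoint (W L) a c = W L.+1 a c) -> n < K ->
  pairing K n (W 0) = W n 0 0.
Proof.
move=> WS nK.
suff shift L : pairing K n (W L) = pairing K 0 (W (n + L)) by rewrite shift pairing0 ?addn0 //; lia.
elim: n nK L => [//|n IH] nK L.
by rewrite pairingS // (pairing_ext _ _ (WS L)) IH ?addnS //; lia.
Qed.

Definition nfinish_at L a c := nfinish L (a - c) (0 < c).
Definition topfinish_at L a c := a * nfinish L (a - c) (0 < c) + topfinish L (a - c) (0 < c).

Lemma adjoint_nfinish L a c : c <= a -> adjoint (nfinish_at L) a c = nfinish_at L.+1 a c.
Proof.
move=> ca; rewrite /adjoint /nfinish_at ca.
have [d ->] : exists d, a = c + d by exists (a - c); lia.
rewrite addKn (_ : (c + d).+1 - c = d.+1) 1?(_ : c + d - c.+1 = d.-1); try lia.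
by rewrite (_ : c < c + d = (0 < d)) /=; [ring | lia].
Qed.

Lemma adjoint_topfinish L a c : c <= a -> adjoint (topfinish_at L) a c = topfinish_at L.+1 a c.
Proof.
move=> ca; rewrite /adjoint /topfinish_at ca.
have [d ->] : exists d, a = c + d by exists (a - c); lia.
rewrite addKn (_ : (c + d).+1 - c = d.+1) 1?(_ : c + d - c.+1 = d.-1); try lia.
by rewrite (_ : c < c + d = (0 < d)) /=; [ring | lia].
Qed.

Lemma sum_nSYTplus (g : nat -> nat) n :
  \sum_(1 <= b < n./2.+1) g b * nSYTplus b n
  = pairing n.+2 n (fun a c => ((a == c) && (0 < c)) * g a).
Proof.
have half_lt a : n./2 < a -> n < a + a.
  by move=> na; have := odd_double_half n; rewrite -addnn; case: odd => /=; lia.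
transitivity (\sum_(0 <= a < n.+2) (0 < a) * g a * nrows2 n a a).
  rewrite (@big_cat_nat _ _ _ 1 0 n.+2) //= big_nat1 mul0n add0n.
  rewrite (@big_cat_nat _ _ _ n./2.+1 1 n.+2) //=; last by have := half_lt n.+1; lia.
  rewrite [X in _ = _ + X]big_nat_cond [X in _ = _ + X]big1 ?addn0 => [|a]; last first.
    by move=> /andP [/andP [/half_lt na _] _]; rewrite nrows2_big ?muln0.
  by apply: eq_big_nat => -[|b] // _; rewrite nSYTplus_rows2 mul1n.
apply: eq_big_nat => a aK.
rewrite (bigD1_seq a) ?mem_index_iota ?iota_uniq //= eqxx big1_seq => [|c /andP [ca _]].
  by rewrite addn0 mulnC mulnA.
by rewrite eq_sym (negbTE ca) muln0.
Qed.

Lemma sum_nSYTplus_nfinish n : \sum_(1 <= b < n./2.+1) nSYTplus b n = nfinish n 0 false.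
Proof.
under eq_bigr do rewrite -[nSYTplus _ n]mul1n.
rewrite sum_nSYTplus [RHS](_ : _ = nfinish_at n 0 0) //.
rewrite -(@pairing_invariant n.+2 n nfinish_at) //; last exact: adjoint_nfinish.
apply: pairing_ext => a c ca; rewrite /nfinish_at /= muln1.
by rewrite (_ : (a == c) = (a - c == 0)) //; apply/eqP/eqP; lia.
Qed.

Lemma sum_nSYTplus_topfinish n :
  \sum_(1 <= b < n./2.+1) b * nSYTplus b n = topfinish n 0 false.
Proof.
rewrite sum_nSYTplus [RHS](_ : _ = topfinish_at n 0 0) //.
rewrite -(@pairing_invariant n.+2 n topfinish_at) //; last exact: adjoint_topfinish.
apply: pairing_ext => a c ca; rewrite /topfinish_at /= addn0 mulnC.
by rewrite (_ : (a == c) = (a - c == 0)) //; apply/eqP/eqP; lia.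
Qed.

Local Open Scope ring_scope.

Definition binZ (N : nat) (i : int) : rat := if i is Posz m then 'C(N, m)%:R else 0.

Lemma binZS N i : binZ N.+1 i = binZ N (i - 1) + binZ N i.
Proof.
case: i => [[|m]|m]; rewrite /binZ ?add0r ?addr0 ?bin0 //.
have -> : m.+1%:Z - 1 = m by lia.
by rewrite binS natrD addrC.
Qed.

Lemma binZ_neg N i : i < 0 -> binZ N i = 0.
Proof. by case: i. Qed.

Lemma binZ_sym N i l : i + l = N%:Z -> binZ N i = binZ N l.
Proof.
case: i l => [m|m] [l|l] //= hN.
- by rewrite -(@bin_sub N m); [congr 'C(_, _)%:R|]; lia.
- by rewrite bin_small //; lia.
- by rewrite bin_small //; lia.
Qed.

(* [bin_at N j k] is C(N, j - k).  Keeping the offset k apart, as a nat, makes repeated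
   use of Pascal's rule produce syntactically equal atoms, which [ring] can then compare. *)
Definition bin_at (N : nat) (j : int) (k : nat) : rat := binZ N (j - k%:Z).

Lemma bin_atS N j k : bin_at N.+1 j k = bin_at N j k.+1 + bin_at N j k.
Proof. by rewrite /bin_at binZS; congr (binZ _ _ + _); lia. Qed.

Lemma bin_at_neg N j k : j < k%:Z -> bin_at N j k = 0.
Proof. by move=> hjk; apply: binZ_neg; lia. Qed.

Lemma bin_at_sym N j k l : (j - k%:Z) + (j - l%:Z) = N%:Z -> bin_at N j k = bin_at N j l.
Proof. exact: binZ_sym. Qed.

Lemma natr_nfinishS L d e : (nfinish L.+1 d e)%:R =
  (nfinish L d.+1 e)%:R + (0 < d)%N%:R * (nfinish L d.-1 true)%:R
  + ((0 < d)%N + e)%:R * (nfinish L d e)%:R :> rat.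
Proof. by rewrite -!natrM -!natrD. Qed.

Lemma natr_topfinishS L d e : (topfinish L.+1 d e)%:R =
  (topfinish L d.+1 e)%:R + (nfinish L d.+1 e)%:R + (0 < d)%N%:R * (topfinish L d.-1 true)%:R
  + ((0 < d)%N + e)%:R * (topfinish L d e)%:R :> rat.
Proof. by rewrite -!natrM -!natrD. Qed.

Lemma nfinish_true L d j k : L%:Z - d%:Z = j - k%:Z ->
  (nfinish L d true)%:R = bin_at L.*2.+1 j k - 2 * bin_at L.*2 j k.+1.
Proof.
elim: L d j k => [|L IH] d j k hj.
  rewrite [bin_at 0 _ _]bin_at_neg ?mulr0 ?subr0; last lia.
  case: d hj => [|d] hj; last by rewrite bin_at_neg //; lia.
  by rewrite /bin_at -hj /= addn0 bin0.
rewrite natr_nfinishS doubleS !bin_atS; case: d hj => [|d] hj /=.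
  rewrite (IH 1%N j k.+2) ?(IH 0%N j k.+1) ?(bin_atS, mul0r); try lia.
  (* reflection: C(2L, L + 1) = C(2L, L - 1) *)
  rewrite (@bin_at_sym L.*2 j k k.+2); last lia.
  ring.
rewrite (IH d.+2 j k.+2) ?(IH d j k) ?(IH d.+1 j k.+1) ?bin_atS; try lia.
ring.
Qed.

Lemma nfinish_false L d j k : L%:Z - d%:Z = j - k%:Z ->
  (nfinish L.+1 d.+1 false)%:R = bin_at L.*2.+2 j k - 2 * bin_at L.*2.+1 j k.+1.
Proof.
elim: L d j k => [|L IH] d j k hj.
  rewrite natr_nfinishS /= (@nfinish_true 0 d j k hj) !bin_atS.
  by rewrite [bin_at 0 j k.+1]bin_at_neg ?[bin_at 0 j k.+2]bin_at_neg; try ring; lia.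
rewrite natr_nfinishS (IH d.+1 j k.+2) ?(IH d j k.+1) ?(@nfinish_true L.+1 d j k) /=;
  try lia.
rewrite doubleS !bin_atS; ring.
Qed.

Lemma topfinish_true L d j k : L%:Z - d%:Z = j - k%:Z ->
  (topfinish L.+1 d true)%:R = d%:R * bin_at L.*2.+1 j k.+1 + bin_at L.*2.+2 j k.+1
    - 2 * bin_at L.*2.+1 j k.+2 + bin_at L.*2 j k.+3.
Proof.
elim: L d j k => [|L IH] d j k hj.
  by rewrite natr_topfinishS /= !bin_at_neg; [ring | lia..].
rewrite natr_topfinishS doubleS; case: d hj => [|d] hj /=.
  rewrite (IH 1%N j k.+2) ?(@nfinish_true L.+1 1 j k.+1) ?(IH 0%N j k.+1); try lia.
  rewrite doubleS !bin_atS; ring.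
rewrite (IH d.+2 j k.+2) ?(@nfinish_true L.+1 d.+2 j k.+1) ?(IH d j k) ?(IH d.+1 j k.+1);
  try lia.
rewrite doubleS !bin_atS; ring.
Qed.

Lemma topfinish_false L d j k : L%:Z - d%:Z = j - k%:Z ->
  (topfinish L.+2 d.+1 false)%:R = d%:R * bin_at L.*2.+2 j k.+1 + 2 * bin_at L.*2.+3 j k.+1
    - 4 * bin_at L.*2.+2 j k.+2 + 2 * bin_at L.*2.+1 j k.+3.
Proof.
elim: L d j k => [|L IH] d j k hj.
  rewrite natr_topfinishS (@topfinish_true 0 d j k hj) (@nfinish_false 0 d.+1 j k.+1) /=; last lia.
  by rewrite !bin_atS !bin_at_neg; [ring | lia..].
rewrite natr_topfinishS (IH d.+1 j k.+2) ?(@nfinish_false L.+1 d.+1 j k.+1)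
  ?(@topfinish_true L.+1 d j k) ?(IH d j k.+1) /=; try lia.
rewrite doubleS !bin_atS; ring.
Qed.

Lemma bin_at_succ N (m : nat) k :
  (N%:R + 1 - m%:R + k%:R) * bin_at N m k.+1 = (m%:R - k%:R) * bin_at N m k.
Proof.
rewrite /bin_at; have [km|mk] := leqP k m; last first.
  by rewrite !binZ_neg ?mulr0 //; lia.
have [i ->] : exists i, m = (i + k)%N by exists (m - k)%N; lia.
have -> : (i + k)%N%:Z - k%:Z = i by lia.
have -> : (i + k)%N%:Z - k.+1%:Z = i%:Z - 1 by lia.
have -> : N%:R + 1 - (i + k)%N%:R + k%:R = N%:R + 1 - i%:R :> rat by rewrite natrD; ring.
have -> : (i + k)%N%:R - k%:R = i%:R :> rat by rewrite natrD; ring.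
case: i => [|i]; first by rewrite mul0r binZ_neg ?mulr0.
have -> : i.+1%:Z - 1 = i by lia.
have [iN|Ni] := leqP i N; last by rewrite /binZ !bin_small ?mulr0 //; lia.
have := congr1 (fun t => t%:R : rat) (mul_bin_left N i).
rewrite /binZ !natrM natrB // => ->.
rewrite -natr1; ring.
Qed.

Lemma topfinish_ratio p :
  (topfinish p.+3 0 false)%:R * (4 * p.+3%:R - 6)
  = (nfinish p.+3 0 false)%:R * (p.+3%:R ^+ 2 + p.+3%:R - 6) :> rat.
Proof.
have -> : (nfinish p.+3 0 false)%:R = bin_at p.*2.+4 p.+1 0 - 2 * bin_at p.*2.+3 p.+1 1.
  by rewrite natr_nfinishS /= (@nfinish_false p.+1 0 p.+1 0) ?doubleS ?mul0r ?addr0.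
have -> : (topfinish p.+3 0 false)%:R = 2 * bin_at p.*2.+3 p.+1 2 - 4 * bin_at p.*2.+2 p.+1 3
    + 2 * bin_at p.*2.+1 p.+1 4 + (bin_at p.*2.+4 p.+1 0 - 2 * bin_at p.*2.+3 p.+1 1).
  rewrite natr_topfinishS /= (@topfinish_false p 0 p.+1 1) ?(@nfinish_false p.+1 0 p.+1 0);
    try lia.
  by rewrite doubleS; ring.
rewrite !bin_atS; set z := bin_at p.*2 p.+1.
(* z k = C(2p, p + 1 - k) *)
have z_sym : z 0%N = z 2%N by apply: bin_at_sym; rewrite -addnn; lia.
have z_succ k : (p%:R + k%:R) * z k.+1 = (p%:R + 1 - k%:R) * z k.
  have -> : p%:R + k%:R = p.*2%:R + 1 - p.+1%:R + k%:R :> rat.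
    by rewrite -addnn natrD -natr1; ring.
  by rewrite bin_at_succ -natr1; congr (_ * _); ring.
have z_ratio k : (0 < k)%N -> z k.+1 = (p%:R + 1 - k%:R) / (p%:R + k%:R) * z k.
  move=> k0; rewrite mulrAC -z_succ mulrAC mulfV ?mul1r //.
  by rewrite lt0r_neq0 // ltr_pwDr ?ltr0n ?ler0n.
rewrite z_sym (z_ratio 4%N) // (z_ratio 3%N) // (z_ratio 2%N) // (z_ratio 1%N) //.
have p_ge0 : 0 <= p%:R :> rat by apply: ler0n.
by field; rewrite !lt0r_neq0 //; lra.
Qed.

Theorem theorem20 (n : nat) (hn : (3 <= n)%N) :
  ((\sum_(1 <= b < n./2.+1) (b * nSYTplus b n)%N)%:R
     / (\sum_(1 <= b < n./2.+1) nSYTplus b n)%:R : rat)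
  = ((n%:R ^+ 2 + n%:R - 6) / (4 * n%:R - 6)).
Proof.
rewrite sum_nSYTplus_topfinish sum_nSYTplus_nfinish.
case: n hn => [|[|[|p]]] // _.
have p_ge0 : 0 <= p%:R :> rat by apply: ler0n.
apply/eqP; rewrite eqr_div; last 2 first.
- by rewrite pnatr_eq0 -lt0n nfinish_false_gt0.
- by rewrite -!natr1; apply/lt0r_neq0; lra.
by rewrite topfinish_ratio mulrC.
Qed.
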